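(* Let $\mathfrak g$ be a finite-dimensional simple complex Lie algebra of classical type, $\mathfrak a\subseteq\mathfrak g$ a semisimple Levi subalgebra and $\lambda\in P^+$. Then the assignment $w_{\pi(\lambda)}\mapsto w_\lambda$ extends to a homomorphism of $\mathfrak a\otimes\mathbb C[t]$-modules $W^{\mathfrak a}(\pi(\lambda))\to W^{\mathfrak g}(\lambda)$.
   Context: $\mathfrak g$ is a finite-dimensional simple complex Lie algebra of classical type with triangular decomposition $\mathfrak g=\mathfrak n^+\oplus\mathfrak h\oplus\mathfrak n^-$, roots $R$, positive roots $R^+$, dominant integral weights $P^+$, $\mathfrak{sl}_2$-triples $x^\pm_\alpha,h_\alpha$. A Levi subalgebra is, for $R'\subseteq R$ closed under addition (within $R$) and under $\alpha\mapsto-\alpha$, $\mathfrak a=\sum_{\alpha\in R'}[\mathfrak g_\alpha,\mathfrak g_{-\alpha}]\oplus\bigoplus_{\alpha\in R'}\mathfrak g_\alpha$, semisimple with induced triangular decomposition $\mathfrak n^\pm_{\mathfrak a}\subseteq\mathfrak n^\pm$, $\mathfrak h_{\mathfrak a}\subseteq\mathfrak h$, positive roots $R'\cap R^+$; $\pi:\mathfrak h^*\to\mathfrak h^*_{\mathfrak a}$ is restriction, mapping $P^+$ to the dominant integral weights of $\mathfrak a$. Current algebra $\mathfrak g\otimes\mathbb C[t]$ with $[x\otimes p,y\otimes q]=[x,y]\otimes pq$. The global Weyl module $W^{\mathfrak g}(\lambda)$ is the $\mathfrak g\otimes\mathbb C[t]$-module generated by $w_\lambda$ subject to $(\mathfrak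 n^+\otimes\mathbb C[t]).w_\lambda=0$, $(h\otimes1).w_\lambda=\lambda(h)w_\lambda$ for $h\in\mathfrak h$, $(x^-_\alpha\otimes1)^{\lambda(h_\alpha)+1}.w_\lambda=0$ for $\alpha\in R^+$; $W^{\mathfrak a}(\mu)$ with generator $w_\mu$ is defined in the same way for $\mathfrak a$ and $\mu$ dominant integral for $\mathfrak a$. *)

From HB Require Import structures.
From mathcomp Require Import all_boot all_order all_algebra.
From mathcomp Require Import reals complex.
Set Implicit Arguments. Unset Strict Implicit. Unset Printing Implicit Defensive.
Import Order.TTheory GRing.Theory Num.Theory.
Local Open Scope ring_scope.

Section Lie.
Variable F : fieldType.
Variable N : nat.
Notation mat := 'M[F]_N.
Notation weight := (mat -> F).

Definition bracket (x y : mat) : mat := x *m y - y *m x.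

Definition sl_pred (x : mat) : Prop := \tr x = 0.
(* Lie algebra of the bilinear form with Gram matrix J *)
Definition form_pred (J : mat) (x : mat) : Prop := x^T *m J + J *m x = 0.
Definition J_orth : mat :=
  \matrix_(i < N, j < N) (if (i + j == N.-1)%N then 1 else 0).
(* symplectic form [[0, K], [-K, 0]], K the antidiagonal identity (N even) *)
Definition J_symp : mat :=
  \matrix_(i < N, j < N)
    (if (i + j == N.-1)%N then (if (i < N./2)%N then 1 else -1) else 0).

(* g is a simple Lie algebra of classical type A_n (n>=1), B_n (n>=2),
   C_n (n>=3) or D_n (n>=4), in its standard matrix realisation. *)
Definition classical (g : mat -> Prop) : Prop :=
  [\/ exists n, (1 <= n)%N /\ N = n.+1 /\ (forall x, g x <-> sl_pred x),
      exists n, (2 <= n)%N /\ N = (n + n).+1 /\ (forall x, g x <-> form_pred J_orth x),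
      exists n, (3 <= n)%N /\ N = (n + n)%N /\ (forall x, g x <-> form_pred J_symp x)
    | exists n, (4 <= n)%N /\ N = (n + n)%N /\ (forall x, g x <-> form_pred J_orth x)].

Variable g : mat -> Prop.

Definition cartan (x : mat) : Prop := g x /\ is_diag_mx x.
Definition nplus (x : mat) : Prop := g x /\ forall i j : 'I_N, (j <= i)%N -> x i j = 0.

(* elements of h^*: functions on gl_N, linear on h and vanishing off h *)
Definition is_weight (l : weight) : Prop :=
  (forall x, ~ cartan x -> l x = 0) /\
  (forall (a : F) x y, cartan x -> cartan y -> l (a *: x + y) = a * l x + l y).

Definition wopp (a : weight) : weight := fun h => - a h.
Definition wadd (a b : weight) : weight := fun h => a h + b h.

Definition rootspace (a : weight) (x : mat) : Prop :=
  g x /\ forall h, cartan h -> bracket h x = a h *: x.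

Definition is_root (a : weight) : Prop :=
  is_weight a /\ (exists h, cartan h /\ a h != 0) /\ (exists x, x != 0 /\ rootspace a x).

Definition pos_root (a : weight) : Prop :=
  is_root a /\ forall x, rootspace a x -> nplus x.

(* [xp, xm] is the coroot h_a of an sl_2-triple (xm, h_a, xp) for a *)
Definition sl2_pair (a : weight) (xp xm : mat) : Prop :=
  rootspace a xp /\ rootspace (wopp a) xm /\ a (bracket xp xm) = 2.

Definition dominant (l : weight) : Prop :=
  is_weight l /\
  forall a xp xm, pos_root a -> sl2_pair a xp xm ->
    exists n : nat, l (bracket xp xm) = n%:R.

Definition span (G : mat -> Prop) (x : mat) : Prop :=
  exists s : seq mat, (forall y, y \in s -> G y) /\ x = \sum_(y <- s) y.

Definition levi_roots (R' : weight -> Prop) : Prop :=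
  [/\ forall a, R' a -> is_root a,
      forall a, R' a -> R' (wopp a) &
      forall a b, R' a -> R' b -> is_root (wadd a b) -> R' (wadd a b)].

Definition coroot_gen (R' : weight -> Prop) (x : mat) : Prop :=
  exists a u v, [/\ R' a, rootspace a u, rootspace (wopp a) v & x = bracket u v].

Definition levi (R' : weight -> Prop) : mat -> Prop :=
  span (fun x => coroot_gen R' x \/ exists a, R' a /\ rootspace a x).
Definition levi_cartan (R' : weight -> Prop) : mat -> Prop := span (coroot_gen R').
Definition levi_nplus (R' : weight -> Prop) : mat -> Prop :=
  span (fun x => exists a, [/\ R' a, pos_root a & rootspace a x]).

End Lie.

Section Modules.
Variable F : fieldType.
Variable N : nat.
Notation mat := 'M[F]_N.

(* act x k v is the action of x (x) t^k on v *)
Definition is_cur_module (L : mat -> Prop) (V : lmodType F)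
    (act : mat -> nat -> V -> V) : Prop :=
  [/\ forall x k (a : F) (u v : V), L x -> act x k (a *: u + v) = a *: act x k u + act x k v,
      forall x y k (a : F) (v : V), L x -> L y ->
        act (a *: x + y) k v = a *: act x k v + act y k v &
      forall x y k l (v : V), L x -> L y ->
        act (bracket x y) (k + l)%N v = act x k (act y l v) - act y l (act x k v)].

Definition is_cur_hom (L : mat -> Prop) (V W : lmodType F)
    (actV : mat -> nat -> V -> V) (actW : mat -> nat -> W -> W) (f : V -> W) : Prop :=
  (forall (a : F) u v, f (a *: u + v) = a *: f u + f v) /\
  (forall x k v, L x -> f (actV x k v) = actW x k (f v)).

(* defining relations of a global Weyl module for the Lie algebra with
   positive nilradical np, Cartan hh and positive roots PR (root spaces and
   coroots taken inside the ambient g), highest weight l (restricted to hh) *)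
Definition weyl_rel (g np hh : mat -> Prop) (PR : (mat -> F) -> Prop)
    (l : mat -> F) (V : lmodType F) (act : mat -> nat -> V -> V) (w : V) : Prop :=
  [/\ forall x k, np x -> act x k w = 0,
      forall h, hh h -> act h 0%N w = l h *: w &
      forall a xp xm (n : nat), PR a -> sl2_pair g a xp xm ->
        l (bracket xp xm) = n%:R -> iter n.+1 (act xm 0%N) w = 0].

(* (V, act, w) is the global Weyl module: the L (x) C[t]-module generated by w
   subject to the relations, i.e. the initial such pointed module *)
Definition is_global_weyl (g L np hh : mat -> Prop) (PR : (mat -> F) -> Prop)
    (l : mat -> F) (V : lmodType F) (act : mat -> nat -> V -> V) (w : V) : Prop :=
  [/\ is_cur_module L act,
      weyl_rel g np hh PR l act w &
      forall (M : lmodType F) (actM : mat -> nat -> M -> M) (m : M),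
        is_cur_module L actM -> weyl_rel g np hh PR l actM m ->
        exists f : V -> M, [/\ is_cur_hom L act actM f, f w = m &
          forall f' : V -> M, is_cur_hom L act actM f' -> f' w = m ->
            forall v, f' v = f v]].

End Modules.

Definition weyl_g (F : fieldType) (N : nat) (g : 'M[F]_N -> Prop) (l : 'M[F]_N -> F)
    (V : lmodType F) act (w : V) : Prop :=
  is_global_weyl g g (nplus g) (cartan g) (pos_root g) l act w.

(* W^a(pi(l)) for the Levi subalgebra a attached to R'; pi(l) is l restricted
   to h_a = levi_cartan g R' *)
Definition weyl_levi (F : fieldType) (N : nat) (g : 'M[F]_N -> Prop)
    (R' : ('M[F]_N -> F) -> Prop) (l : 'M[F]_N -> F)
    (V : lmodType F) act (w : V) : Prop :=
  is_global_weyl g (levi g R') (levi_nplus g R') (levi_cartan g R')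
    (fun a => R' a /\ pos_root g a) l act w.

From Pilot Require Import Defs.
From HB Require Import structures.
From mathcomp Require Import all_boot all_order all_algebra.
From mathcomp Require Import reals complex.
From mathcomp Require Import zify.
Set Implicit Arguments. Unset Strict Implicit. Unset Printing Implicit Defensive.
Import Order.TTheory GRing.Theory Num.Theory.
Local Open Scope ring_scope.

(* Restricted to a (x) C[t], the global Weyl module W^g(l) is generated by w_l,
   which satisfies the defining relations of W^a(pi(l)): n^+_a lies in n^+,
   h_a in h, and the positive roots of a are positive roots of g with the same
   sl_2-triples.  The universal property of W^a(pi(l)) then gives the map.
   In the matrix model the one point needing an argument is h_a <= h: a coroot
   [x_a, x_-a] commutes with the diagonal Cartan subalgebra h, and h separates
   the coordinates (in characteristic <> 2), so the coroot is diagonal. *)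

Section MatrixLie.
Variables (F : fieldType) (N : nat).
Implicit Types (x y z h u v : 'M[F]_N) (P G : 'M[F]_N -> Prop).

Lemma bracketZl c x y : bracket (c *: x) y = c *: bracket x y.
Proof. by rewrite /bracket scalerBr -scalemxAl -scalemxAr. Qed.

Lemma bracketZr c x y : bracket x (c *: y) = c *: bracket x y.
Proof. by rewrite /bracket scalerBr -scalemxAl -scalemxAr. Qed.

Lemma bracket_jacobi h u v :
  bracket h (bracket u v) = bracket (bracket h u) v + bracket u (bracket h v).
Proof.
rewrite /bracket !mulmxBl !mulmxBr !mulmxA !opprB !addrA.
move: (h *m u *m v) (h *m v *m u) (u *m v *m h) (v *m u *m h) => a b c d.
move: (u *m h *m v) (v *m h *m u) => e f.
rewrite [in RHS](addrAC a) (addrAC _ (- f)) subrK (addrAC _ (- c)) subrK addrAC.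
by rewrite [RHS]addrAC [in RHS](addrAC a) [LHS]addrAC.
Qed.

Definition lie_closed P :=
  [/\ P 0, forall x y, P x -> P y -> P (x + y)
         & forall x y, P x -> P y -> P (bracket x y)].

Lemma sl_lie_closed : lie_closed (@sl_pred F N).
Proof.
rewrite /sl_pred; split=> [|x y|x y]; first exact: raddf0.
  by rewrite raddfD /= => -> ->; rewrite addr0.
by rewrite raddfB /= mxtrace_mulC subrr.
Qed.

Lemma form_lie_closed J : lie_closed (form_pred J).
Proof.
have formE x : form_pred J x <-> x^T *m J = - (J *m x).
  by rewrite /form_pred; split=> [/eqP|->]; [rewrite addr_eq0 => /eqP | rewrite addNr].
split=> [|x y /formE hx /formE hy|x y /formE hx /formE hy]; apply/formE.
- by rewrite trmx0 mul0mx mulmx0 oppr0.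
- by rewrite raddfD /= mulmxDl mulmxDr hx hy opprD.
rewrite /bracket raddfB /= !trmx_mul mulmxBl mulmxBr -!mulmxA hx hy.
by rewrite !mulmxN !mulmxA hx hy !mulNmx !opprK opprB.
Qed.

Lemma span_ind P G :
  P 0 -> (forall x y, P x -> P y -> P (x + y)) -> (forall x, G x -> P x) ->
  forall x, Defs.span G x -> P x.
Proof.
move=> P0 PD GP x [s [Gs ->]]; elim: s Gs => [|y s IHs] Gs; first by rewrite big_nil.
rewrite big_cons; apply: PD; first by apply/GP/Gs; exact: mem_head.
by apply: IHs => z sz; apply: Gs; rewrite in_cons sz orbT.
Qed.

Definition separates_coordinates P :=
  forall i j : 'I_N, i != j -> exists2 d, P d & d i i != d j j.

Lemma commute_diag_entry (r : 'rV[F]_N) z i j :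
  bracket (diag_mx r) z = 0 -> (r 0 i - r 0 j) * z i j = 0.
Proof.
move=> /matrixP/(_ i j); rewrite /bracket mul_diag_mx mul_mx_diag !mxE.
by rewrite mulrBl (mulrC (z i j)).
Qed.

Lemma centralizer_diag P z :
  (forall d, P d -> is_diag_mx d) -> separates_coordinates P ->
  (forall d, P d -> bracket d z = 0) -> is_diag_mx z.
Proof.
move=> Pdiag Psep Pz; apply/is_diag_mxP => i j ij.
have [d Pd] := Psep i j ij; move: (Pz d Pd).
have /diag_mxP[r ->] := Pdiag d Pd.
move=> /(commute_diag_entry i j)/eqP rz_eq0; rewrite !mxE !eqxx !mulr1n => rij.
by move: rz_eq0; rewrite mulf_eq0 subr_eq0 (negbTE rij) => /eqP.
Qed.

Definition diag_unit_diff (i j : 'I_N) : 'M[F]_N := diag_mx ('e_i - 'e_j).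

Lemma diag_unit_diff_entry i j c :
  diag_unit_diff i j c c = (c == i)%:R - (c == j)%:R.
Proof. by rewrite !mxE !eqxx /= mulr1n. Qed.

Lemma diag_unit_diff_neq i j c : (2 : F) != 0 -> i != j -> c != i ->
  diag_unit_diff i j c c != diag_unit_diff i j i i.
Proof.
move=> two_neq0 ij ci; rewrite !diag_unit_diff_entry eqxx (negbTE ci) (negbTE ij).
rewrite /= mulr1n sub0r subr0; case: (c == j); last by rewrite oppr0 eq_sym oner_eq0.
by apply: contra two_neq0 => /eqP m1; rewrite -[2]/(1 + 1) -{1}m1 addNr.
Qed.

Lemma sl_diag_unit_diff i j : sl_pred (diag_unit_diff i j).
Proof.
have sum_unit (k : 'I_N) : \sum_(c < N) 'e_k 0 c = 1 :> F.
  rewrite (bigD1 k) //= big1 => [|c ck]; first by rewrite !mxE !eqxx addr0.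
  by rewrite !mxE (negbTE ck) andbF.
by rewrite /sl_pred /diag_unit_diff !linearB /= !mxtrace_diag !sum_unit subrr.
Qed.

Lemma form_diag_unit_diff (J : 'M[F]_N) (k : 'I_N) :
  (forall a b : 'I_N, b != rev_ord a -> J a b = 0) ->
  form_pred J (diag_unit_diff k (rev_ord k)).
Proof.
move=> J_antidiag; rewrite /form_pred tr_diag_mx mul_diag_mx mul_mx_diag.
apply/matrixP => a b; rewrite !mxE.
have [->|ba] := eqVneq b (rev_ord a); last by rewrite J_antidiag // mulr0 mul0r addr0.
rewrite /= (inj_eq rev_ord_inj) (can2_eq rev_ordK rev_ordK).
by rewrite [in X in _ + X]mulrC -mulrDl addrA subrK subrr mul0r.
Qed.

Lemma addn_eq_pred_rev_ord (a b : 'I_N) : (a + b == N.-1)%N = (b == rev_ord a).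
Proof.
by apply/eqP/eqP => [ab|->]; [apply: val_inj => /=|rewrite /=]; have := ltn_ord a; lia.
Qed.

End MatrixLie.

Arguments diag_unit_diff {F N}.

Section ClassicalLie.
Variables (F : fieldType) (N : nat) (g : 'M[F]_N -> Prop).
Hypothesis g_classical : classical g.

Lemma classical_lie_closed : lie_closed g.
Proof.
have transfer P : lie_closed P -> (forall x, g x <-> P x) -> lie_closed g.
  move=> [P0 PD PB] gP; split=> [|x y /gP Px /gP Py|x y /gP Px /gP Py]; apply/gP.
  - exact: P0.
  - exact: PD.
  exact: PB.
by case: g_classical => -[n [_ [_ gP]]]; apply: transfer gP;
  [exact: sl_lie_closed | exact: form_lie_closed ..].
Qed.

Lemma classical_cartan_separates : (2 : F) != 0 -> separates_coordinates (cartan g).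
Proof.
move=> two_neq0 i j ij.
have cartan_unit_diff (k l : 'I_N) : g (diag_unit_diff k l) -> cartan g (diag_unit_diff k l).
  by split=> //; exact: diag_mx_is_diag.
have form_case (J : 'M[F]_N) : (forall x, g x <-> form_pred J x) ->
    (forall a b : 'I_N, b != rev_ord a -> J a b = 0) ->
    exists2 d, cartan g d & d i i != d j j.
  move=> gJ J_antidiag.
  have cartan_rev (k : 'I_N) : cartan g (diag_unit_diff k (rev_ord k)).
    by apply/cartan_unit_diff/gJ/form_diag_unit_diff.
  have [ri|ri] := eqVneq (rev_ord i) i.
    have rj : rev_ord j != j.
      apply: contra ij => /eqP rj; apply/eqP/val_inj.
      by move: (congr1 val ri) (congr1 val rj) => /=; have := ltn_ord i; lia.
    exists (diag_unit_diff j (rev_ord j)) => //.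
    by apply: diag_unit_diff_neq => //; rewrite eq_sym.
  exists (diag_unit_diff i (rev_ord i)) => //.
  by rewrite eq_sym; apply: diag_unit_diff_neq => //; rewrite eq_sym.
case: g_classical => -[n [_ [_ gP]]]; last 3 first.
- by apply: form_case gP _ => a b ba; rewrite mxE addn_eq_pred_rev_ord (negbTE ba).
- by apply: form_case gP _ => a b ba; rewrite mxE addn_eq_pred_rev_ord (negbTE ba).
- by apply: form_case gP _ => a b ba; rewrite mxE addn_eq_pred_rev_ord (negbTE ba).
exists (diag_unit_diff i j); first by apply/cartan_unit_diff/gP/sl_diag_unit_diff.
by rewrite eq_sym; apply: diag_unit_diff_neq => //; rewrite eq_sym.
Qed.

Lemma bracket_rootspace_opp (a : 'M[F]_N -> F) u v h :
  rootspace g a u -> rootspace g (wopp a) v -> cartan g h ->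
  bracket h (bracket u v) = 0.
Proof.
move=> [_ hu] [_ hv] ch.
by rewrite bracket_jacobi (hu h) // (hv h) // bracketZl bracketZr /wopp scaleNr addrN.
Qed.

Variable R' : ('M[F]_N -> F) -> Prop.

Lemma levi_sub x : levi g R' x -> g x.
Proof.
have [g0 gD gB] := classical_lie_closed.
apply: span_ind x => // x [[a [u [v [_ [gu _] [gv _] ->]]]] | [a [_ [gx _]]]] //.
exact: gB.
Qed.

Lemma levi_nplus_sub x : levi_nplus g R' x -> nplus g x.
Proof.
have [g0 gD _] := classical_lie_closed.
apply: span_ind x.
- by split=> // i j _; rewrite mxE.
- move=> x y [gx x0] [gy y0]; split=> [|i j ji]; first exact: gD.
  by rewrite mxE x0 ?y0 ?addr0.
by move=> x [a [_ [_ a_pos] ax]]; exact: a_pos.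
Qed.

Lemma levi_cartan_sub x : (2 : F) != 0 -> levi_cartan g R' x -> cartan g x.
Proof.
move=> two_neq0; have [g0 gD gB] := classical_lie_closed.
apply: span_ind x.
- by split=> //; exact: mx0_is_diag.
- move=> x y [gx /is_diag_mxP x0] [gy /is_diag_mxP y0]; split; first exact: gD.
  by apply/is_diag_mxP => i j ij; rewrite mxE x0 ?y0 ?addr0.
move=> _ [a [u [v [_ au av ->]]]]; split; first by apply: gB; [case: au | case: av].
apply: (centralizer_diag (P := cartan g)) => [d []//||d cd].
  exact: classical_cartan_separates.
exact: bracket_rootspace_opp au av cd.
Qed.

End ClassicalLie.

Section CurrentModules.
Variables (F : fieldType) (N : nat).
Implicit Types (L np hh : 'M[F]_N -> Prop) (PR : ('M[F]_N -> F) -> Prop).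

Lemma is_cur_module_sub L L' (V : lmodType F) (act : 'M[F]_N -> nat -> V -> V) :
  (forall x, L' x -> L x) -> is_cur_module L act -> is_cur_module L' act.
Proof.
move=> LL' [actD Dact actB].
by split=> *; [apply: actD | apply: Dact | apply: actB]; auto.
Qed.

Lemma weyl_rel_sub g np np' hh hh' PR PR' (l : 'M[F]_N -> F)
    (V : lmodType F) (act : 'M[F]_N -> nat -> V -> V) (w : V) :
  (forall x, np' x -> np x) -> (forall x, hh' x -> hh x) ->
  (forall a, PR' a -> PR a) ->
  weyl_rel g np hh PR l act w -> weyl_rel g np' hh' PR' l act w.
Proof.
move=> npS hhS PRS [np_w hh_w PR_w]; split=> [x k /npS|h /hhS|a xp xm n /PRS].
- exact: np_w.
- exact: hh_w.
exact: PR_w.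
Qed.

Lemma global_weyl_hom g L np hh PR (l : 'M[F]_N -> F)
    (V : lmodType F) (act : 'M[F]_N -> nat -> V -> V) (w : V)
    (M : lmodType F) (actM : 'M[F]_N -> nat -> M -> M) (m : M) :
  is_global_weyl g L np hh PR l act w ->
  is_cur_module L actM -> weyl_rel g np hh PR l actM m ->
  exists f : V -> M, is_cur_hom L act actM f /\ f w = m.
Proof.
case=> _ _ univ actM_mod m_rel.
by have [f [f_hom fw _]] := univ M actM m actM_mod m_rel; exists f.
Qed.

End CurrentModules.

Unset Implicit Arguments.
Theorem mainTheorem8 (R : realType) (N : nat) (g : 'M[R[i]]_N -> Prop)
  (Hg : classical g)
  (R' : ('M[R[i]]_N -> R[i]) -> Prop) (HR' : levi_roots g R')
  (l : 'M[R[i]]_N -> R[i]) (Hl : dominant g l)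
  (Va : lmodType R[i]) (acta : 'M[R[i]]_N -> nat -> Va -> Va) (wa : Va)
  (Ha : weyl_levi g R' l acta wa)
  (Vg : lmodType R[i]) (actg : 'M[R[i]]_N -> nat -> Vg -> Vg) (wg : Vg)
  (Hgw : weyl_g g l actg wg) :
  exists f : Va -> Vg, is_cur_hom (levi g R') acta actg f /\ f wa = wg.
Proof.
have two_neq0 : (2 : R[i]) != 0 by rewrite pnatr_eq0.
case: Hgw => actg_mod wg_rel _.
apply: (global_weyl_hom Ha).
  by apply: is_cur_module_sub actg_mod => x; exact: levi_sub.
apply: weyl_rel_sub wg_rel => [x|x|a []//].
  exact: levi_nplus_sub.
exact: levi_cartan_sub.
Qed.
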